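(* Let $\gamma$ be an arc-length parametrized curve in a $2$-dimensional real space form $M^2(G)$ with curvature $k$, and let $(T_{\mathcal{P},\gamma}(\Lambda_G),[\cdot,\cdot]_\gamma)$ and $\mathrm{der}^*(\mathcal{P})$ be as below. The map $\Phi_\gamma:T_{\mathcal{P},\gamma}(\Lambda_G)\to\mathrm{der}^*(\mathcal{P})$, $\Phi_\gamma(\mathbf{V})=\partial_{\mathbf{V}(k)}$, is a homomorphism of Lie algebras.
   Context: $\mathcal{P}=\mathbb{R}[k^{(m)}:m\in\mathbb{N}]$ (polynomials in $k$ and its arc-length derivatives), $\mathcal{P}_0$ those with zero constant term. For $a\in\mathcal{P}$, $\partial_a=\sum_{m\ge0}a^{(m)}\frac{\partial}{\partial k^{(m)}}$ is a derivation of $\mathcal{P}$; $\mathrm{der}^*(\mathcal{P})=\{\partial_a:a\in\mathcal{P}\}$ is a Lie algebra under the commutator, with $[\partial_a,\partial_b]=\partial_{\partial_ab-\partial_ba}$. Frenet frame $\{\mathbf{T},\mathbf{N}\}$ with $\nabla_{\mathbf{T}}\mathbf{T}=k\mathbf{N}$, $\nabla_{\mathbf{T}}\mathbf{N}=-k\mathbf{T}$. $T_{\mathcal{P},\gamma}(\Lambda_G)=\{\mathbf{V}=f\mathbf{T}+g\mathbf{N}: f,g\in\mathcal{P},\ f\in\mathcal{P}_0,\ f'=kg\}$. For $\mathbf{V}=f\mathbf{T}+g\mathbf{N}$ with $f,g\in\mathcal{P}$ put $\rho_{\mathbf{V}}=f'-kg$, $\varphi_{\mathbf{V}}=g'+kf$;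 $\mathbf{V}$ acts on $\mathcal{P}$ as the derivation with $\mathbf{V}(k)=\varphi_{\mathbf{V}}'-k\rho_{\mathbf{V}}+Gg$ and $\mathbf{V}(h')=\mathbf{V}(h)'+\rho_{\mathbf{V}}h'$ (so for $\mathbf{V}\in T_{\mathcal{P},\gamma}(\Lambda_G)$, $\mathbf{V}(k)=\varphi_{\mathbf{V}}'+Gg$). Define $D_{\mathbf{V}}\mathbf{W}=(\mathbf{V}(f_{\mathbf{W}})-g_{\mathbf{W}}\varphi_{\mathbf{V}})\mathbf{T}+(\mathbf{V}(g_{\mathbf{W}})+f_{\mathbf{W}}\varphi_{\mathbf{V}})\mathbf{N}$ for $\mathbf{W}=f_{\mathbf{W}}\mathbf{T}+g_{\mathbf{W}}\mathbf{N}$, and the Lie bracket $[\mathbf{V},\mathbf{W}]_\gamma=D_{\mathbf{V}}\mathbf{W}-D_{\mathbf{W}}\mathbf{V}$, under which $T_{\mathcal{P},\gamma}(\Lambda_G)$ is a Lie algebra. *)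

From HB Require Import structures.
From mathcomp Require Import all_boot all_order all_algebra.
From mathcomp Require Import finmap.
From mathcomp.multinomials Require Import monalg.
From mathcomp Require Import reals.

Set Implicit Arguments.
Unset Strict Implicit.
Unset Printing Implicit Defensive.

Import Order.TTheory GRing.Theory Num.Theory.
Local Open Scope ring_scope.

Section Defs.
Variable R : realType.

(* P = R[k^(m) : m in nat]: the free commutative R-algebra on the
   variables k^(0), k^(1), ... (monomials = finitely supported nat -> nat). *)
Definition P := {malg R[{cmonom nat}]}.

Definition kv (m : nat) : P := << (@ucm nat m) >>.

Definition const_term (p : P) : R := p@_(@onecm nat).

Definition pd (m : nat) (p : P) : P :=
  \sum_(mon <- msupp p) (p@_mon * (mon m)%:R) *: << divcm mon (@ucm nat m) >>.

Definition nvar (p : P) : nat :=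
  (\max_(mon <- msupp p) \max_(i <- finsupp mon) i.+1)%N.

(* the derivation of P sending k^(i) to e i:  p |-> sum_i e i * dp/dk^(i) *)
Definition extD (e : nat -> P) (p : P) : P :=
  \sum_(i < nvar p) e i * pd i p.

(* arc-length derivative  h |-> h' , the derivation with (k^(m))' = k^(m+1) *)
Definition D (p : P) : P := extD (fun i => kv i.+1) p.

Definition Dn (m : nat) (a : P) : P := iter m D a.

Definition pder (a : P) (h : P) : P := extD (fun i => Dn i a) h.

(* vector fields V = f T + g N, represented as the pair (f, g) *)
Definition VF := (P * P)%type.

Definition rhoV (V : VF) : P := D V.1 - kv 0 * V.2.
Definition phiV (V : VF) : P := D V.2 + kv 0 * V.1.

Definition Vk (G : R) (V : VF) : P := D (phiV V) - kv 0 * rhoV V + G%:MP * V.2.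

(* V(k^(m)), determined by V(h') = V(h)' + rho_V h' *)
Fixpoint Vgen (G : R) (V : VF) (m : nat) : P :=
  match m with
  | 0 => Vk G V
  | m'.+1 => D (Vgen G V m') + rhoV V * kv m'.+1
  end.

Definition Vact (G : R) (V : VF) (h : P) : P := extD (Vgen G V) h.

(* membership in T_{P,gamma}(Lambda_G):  f in P_0 and f' = k g *)
Definition inT (V : VF) : Prop := const_term V.1 = 0 /\ D V.1 = kv 0 * V.2.

Definition covD (G : R) (V W : VF) : VF :=
  (Vact G V W.1 - W.2 * phiV V, Vact G V W.2 + W.1 * phiV V).

Definition brk (G : R) (V W : VF) : VF :=
  ((covD G V W).1 - (covD G W V).1, (covD G V W).2 - (covD G W V).2).

Definition addVF (V W : VF) : VF := (V.1 + W.1, V.2 + W.2).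
Definition scaleVF (c : R) (V : VF) : VF := (c *: V.1, c *: V.2).

Definition Phi (G : R) (V : VF) : P -> P := pder (Vk G V).

End Defs.

(* For V tangent to Lambda_G the Frenet relation f' = k g makes rho_V vanish, so V acts on P
   as the derivation with V(k^(m)) = V(k)^(m), that is, as partial_{V(k)}.  A derivation of P
   is determined by its values on the variables k^(m), and partial_a commutes with ', hence
   [partial_a, partial_b] = partial_{partial_a b - partial_b a}.  Linearity of Phi_gamma thus
   reduces to that of V |-> V(k), and the bracket to [V, W]_gamma(k) = V(W(k)) - W(V(k)), a
   direct computation using only the Leibniz rule, the commutation of partial_{V(k)} with ',
   the Frenet relations and G' = 0. *)

From HB Require Import structures.
From mathcomp Require Import all_boot all_order all_algebra.
From mathcomp Require Import finmap.
From mathcomp.multinomials Require Import monalg.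
From mathcomp Require Import reals.
From mathcomp Require Import ring zify.

Set Implicit Arguments.
Unset Strict Implicit.
Unset Printing Implicit Defensive.

Import GRing.Theory.
Local Open Scope ring_scope.

Section Derivations.
Variables (R : comRingType) (A : comAlgType R).

Definition derivation (d : A -> A) : Prop :=
  [/\ {morph d : x y / x + y}, forall (c : R) x, d (c *: x) = c *: d x
    & forall x y, d (x * y) = d x * y + x * d y].

Section DerivationTheory.
Variable d : A -> A.
Hypothesis d_der : derivation d.

Lemma derD : {morph d : x y / x + y}. Proof. by case: d_der. Qed.
Lemma derZ c x : d (c *: x) = c *: d x. Proof. by case: d_der. Qed.
Lemma derM x y : d (x * y) = d x * y + x * d y. Proof. by case: d_der. Qed.

Lemma derN : {morph d : x / - x}.
Proof. by move=> x; rewrite -scaleN1r derZ scaleN1r. Qed.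

Lemma derB : {morph d : x y / x - y}.
Proof. by move=> x y; rewrite derD derN. Qed.

Lemma der1 : d 1 = 0.
Proof.
have := derM 1 1; rewrite !mulr1 mul1r => d1E.
by apply: (addrI (d 1)); rewrite addr0 -d1E.
Qed.

Lemma der0 : d 0 = 0.
Proof. by have := derZ 0 0; rewrite !scale0r. Qed.

Lemma der_alg c : d c%:A = 0.
Proof. by rewrite derZ der1 scaler0. Qed.

Lemma iter_derD m : {morph iter m d : x y / x + y}.
Proof. by elim: m => // m IH x y /=; rewrite IH derD. Qed.

Lemma iter_derZ m c x : iter m d (c *: x) = c *: iter m d x.
Proof. by elim: m => //= m IH; rewrite IH derZ. Qed.

Lemma iter_derB m : {morph iter m d : x y / x - y}.
Proof. by move=> x y; rewrite iter_derD -scaleN1r iter_derZ scaleN1r. Qed.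

End DerivationTheory.

Lemma derivation_commutator d1 d2 : derivation d1 -> derivation d2 ->
  derivation (fun x => d1 (d2 x) - d2 (d1 x)).
Proof.
move=> d1_der d2_der; split=> [x y | c x | x y].
- by rewrite !(derD d1_der, derD d2_der); ring.
- by rewrite !(derZ d1_der, derZ d2_der) scalerBr.
- by rewrite !(derM d1_der, derM d2_der, derD d1_der, derD d2_der); ring.
Qed.

Section Generators.
Variable gen : nat -> A.
Hypothesis gen_ind : forall Q : A -> Prop, Q 1 -> (forall i, Q (gen i)) ->
  (forall x y, Q x -> Q y -> Q (x + y)) -> (forall x y, Q x -> Q y -> Q (x * y)) ->
  (forall c x, Q x -> Q (c *: x)) -> forall x, Q x.

Lemma derivation_eq d1 d2 : derivation d1 -> derivation d2 ->
  (forall i, d1 (gen i) = d2 (gen i)) -> d1 =1 d2.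
Proof.
move=> d1_der d2_der eq_gen; apply: gen_ind => //.
- by rewrite (der1 d1_der) (der1 d2_der).
- by move=> x y eq_x eq_y; rewrite (derD d1_der) (derD d2_der) eq_x eq_y.
- by move=> x y eq_x eq_y; rewrite (derM d1_der) (derM d2_der) eq_x eq_y.
- by move=> c x eq_x; rewrite (derZ d1_der) (derZ d2_der) eq_x.
Qed.

Lemma derivations_commute d1 d2 : derivation d1 -> derivation d2 ->
  (forall i, d1 (d2 (gen i)) = d2 (d1 (gen i))) -> forall x, d1 (d2 x) = d2 (d1 x).
Proof.
move=> d1_der d2_der comm_gen x; apply/eqP; rewrite -subr_eq0; apply/eqP.
have zero_der : derivation (fun=> 0).
  by split=> [x1 y1 | c x1 | x1 y1]; rewrite ?addr0 ?scaler0 ?mulr0 ?mul0r ?addr0.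
apply: (derivation_eq (derivation_commutator d1_der d2_der) zero_der) => i /=.
by rewrite comm_gen subrr.
Qed.

Section PartialDerivatives.
Variables (pd : nat -> A -> A) (nvar : A -> nat).
Hypothesis pd_der : forall i, derivation (pd i).
Hypothesis pd_gen : forall i j, pd i (gen j) = (i == j)%:R.
Hypothesis pd_nvar : forall i x, (nvar x <= i)%N -> pd i x = 0.

Lemma sum_pd_widen (e : nat -> A) x n : (nvar x <= n)%N ->
  \sum_(i < nvar x) e i * pd i x = \sum_(i < n) e i * pd i x.
Proof.
move=> le_x_n; rewrite (big_ord_widen n (fun i => e i * pd i x) le_x_n) big_mkcond /=.
by apply: eq_bigr => i _; case: ltnP => // /pd_nvar ->; rewrite mulr0.
Qed.

Lemma sum_pd_derivation (e : nat -> A) :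
  derivation (fun x => \sum_(i < nvar x) e i * pd i x).
Proof.
split=> [x y | c x | x y].
- set n := maxn (nvar (x + y)) (maxn (nvar x) (nvar y)).
  rewrite !(@sum_pd_widen e _ n) ?/n; try lia.
  by rewrite -big_split; apply: eq_bigr => i _; rewrite (derD (pd_der i)) mulrDr.
- set n := maxn (nvar (c *: x)) (nvar x).
  rewrite !(@sum_pd_widen e _ n) ?/n; try lia.
  by rewrite scaler_sumr; apply: eq_bigr => i _; rewrite (derZ (pd_der i)) scalerAr.
- set n := maxn (nvar (x * y)) (maxn (nvar x) (nvar y)).
  rewrite !(@sum_pd_widen e _ n) ?/n; try lia.
  rewrite mulr_suml mulr_sumr -big_split; apply: eq_bigr => i _ /=.
  by rewrite (derM (pd_der i)); ring.
Qed.

Lemma sum_pd_gen (e : nat -> A) j : \sum_(i < nvar (gen j)) e i * pd i (gen j) = e j.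
Proof.
have lt_j : (j < maxn (nvar (gen j)) j.+1)%N by lia.
rewrite (@sum_pd_widen e _ (maxn (nvar (gen j)) j.+1)); last by lia.
rewrite (bigD1 (Ordinal lt_j)) //= pd_gen eqxx mulr1 big1 ?addr0 // => i.
by rewrite -val_eqE /= pd_gen => /negbTE ->; rewrite mulr0.
Qed.

End PartialDerivatives.
End Generators.

Section FrenetCurvature.
Variables (D : A -> A) (k gc : A).
Hypothesis D_der : derivation D.
Hypothesis D_gc : D gc = 0.

(* [curv f g] is V(k) for V = f T + g N, with [gc] standing for the constant G. *)
Local Notation curv f g := (D (D g + k * f) - k * (D f - k * g) + gc * g).

Lemma curvD f1 g1 f2 g2 : curv (f1 + f2) (g1 + g2) = curv f1 g1 + curv f2 g2.
Proof. by rewrite !(derD D_der, derB D_der, derM D_der); ring. Qed.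

Lemma curvZ c f g : curv (c *: f) (c *: g) = c *: curv f g.
Proof.
rewrite -[c *: f]mulr_algl -[c *: g]mulr_algl -[c *: (_ + _)]mulr_algl.
rewrite !(derD D_der, derB D_der, derM D_der, der_alg D_der, der0 D_der).
by move: (c%:A) => a; ring.
Qed.

Lemma curv_bracket d1 d2 f1 g1 f2 g2 :
  derivation d1 -> derivation d2 ->
  (forall x, d1 (D x) = D (d1 x)) -> (forall x, d2 (D x) = D (d2 x)) ->
  d1 gc = 0 -> d2 gc = 0 -> D f1 = k * g1 -> D f2 = k * g2 ->
  d1 k = curv f1 g1 -> d2 k = curv f2 g2 ->
  curv (d1 f2 - g2 * (D g1 + k * f1) - (d2 f1 - g1 * (D g2 + k * f2)))
       (d1 g2 + f2 * (D g1 + k * f1) - (d2 g1 + f1 * (D g2 + k * f2)))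
  = d1 (curv f2 g2) - d2 (curv f1 g1).
Proof.
move=> d1_der d2_der d1D d2D d1_gc d2_gc Df1 Df2 d1k d2k.
have Dd1 x : D (d1 x) = d1 (D x) by rewrite d1D.
have Dd2 x : D (d2 x) = d2 (D x) by rewrite d2D.
have d1Dk : d1 (D k) = D (curv f1 g1) by rewrite d1D d1k.
have d2Dk : d2 (D k) = D (curv f2 g2) by rewrite d2D d2k.
rewrite !(derD D_der, derN D_der, derM D_der, derD d1_der, derN d1_der, derM d1_der,
  derD d2_der, derN d2_der, derM d2_der, Dd1, Dd2, Df1, Df2, D_gc, d1_gc, d2_gc,
  d1Dk, d2Dk, d1k, d2k).
by ring.
Qed.

End FrenetCurvature.
End Derivations.

Section ArcLengthDerivative.
Variable R : realType.
Local Notation P := (P R).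
Local Notation kv := (@kv R).
Local Notation pd := (@pd R).
Local Notation nvar := (@nvar R).
Local Notation extD := (@extD R).
Local Notation D := (@D R).
Local Notation Dn := (@Dn R).
Local Notation pder := (@pder R).
Local Notation VF := (VF R).

(* Rewrites in P are confined to explicit subterms: letting Rocq match two distinct
   monomials makes it evaluate them, which does not terminate in practice. *)

Definition pd_mon (i : nat) (m : cmonom nat) : P := (m i)%:R *: << divcm m (ucm i) >>.

Lemma pdE i (p : P) : pd i p = mmap (@malgC _ R) (pd_mon i) p.
Proof. by rewrite /pd mmapE; apply: eq_bigr => m _; rewrite mul_malgC scalerA. Qed.

Lemma pdD i : {morph pd i : p q / p + q}.
Proof. by move=> p q; rewrite !pdE mmapD. Qed.

Lemma pd_sum i (I : Type) (r : seq I) (F : I -> P) :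
  pd i (\sum_(j <- r) F j) = \sum_(j <- r) pd i (F j).
Proof. by rewrite pdE raddf_sum; apply: eq_bigr => j _; rewrite pdE. Qed.

Lemma scale_malgU c (m : cmonom nat) : c *: << m >> = << c *g m >> :> P.
Proof. by rewrite -mul_malgC malgM_def fgmulUU mulr1 mul1m. Qed.

Lemma pdU i c (m : cmonom nat) :
  pd i << c *g m >> = << c * (m i)%:R *g divcm m (ucm i) >>.
Proof. by rewrite pdE mmapU mul_malgC scalerA scale_malgU. Qed.

Lemma pdZ i c (p : P) : pd i (c *: p) = c *: pd i p.
Proof.
transitivity (\sum_(m <- msupp p) (c * p@_m)%:MP * pd_mon i m).
  by rewrite pdE (mmapEw (msuppZ_le c p)); apply: eq_bigr => m _; rewrite mcoeffZ.
rewrite pdE mmapE scaler_sumr; apply: eq_bigr => m _.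
by rewrite [in LHS]mul_malgC [in RHS]mul_malgC [in RHS]scalerA.
Qed.

Lemma malgUM c d (m n : cmonom nat) :
  << c *g m >> * << d *g n >> = << c * d *g mmul m n >> :> P.
Proof. by rewrite malgM_def fgmulUU. Qed.

Lemma divcmMl i (m n : cmonom nat) : (0 < m i)%N ->
  divcm (mmul m n) (ucm i) = mmul (divcm m (ucm i)) n.
Proof.
by move=> mi; apply/eqP/cmP => j; rewrite divcmE !cmM divcmE ucmE; case: eqP => [<-|]; lia.
Qed.

Lemma malgU_divcmMl i x (m n : cmonom nat) :
  << (m i)%:R * x *g divcm (mmul m n) (ucm i) >> =
  << (m i)%:R * x *g mmul (divcm m (ucm i)) n >> :> P.
Proof.
case: (posnP (m i)) => [mi0|/divcmMl -> //].
by rewrite mi0 mul0r [LHS]monalgU0 [RHS]monalgU0.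
Qed.

Lemma malgU_divcmMr i x (m n : cmonom nat) :
  << (n i)%:R * x *g divcm (mmul m n) (ucm i) >> =
  << (n i)%:R * x *g mmul m (divcm n (ucm i)) >> :> P.
Proof. by rewrite mulmC malgU_divcmMl mulmC. Qed.

Lemma pdUM i c d (m n : cmonom nat) :
  pd i (<< c *g m >> * << d *g n >>) =
  pd i << c *g m >> * << d *g n >> + << c *g m >> * pd i << d *g n >>.
Proof.
rewrite [in LHS]malgUM [LHS]pdU cmM natrD mulrDr [LHS]monalgUD.
rewrite [X in X * _ + _]pdU [X in _ + _ * X]pdU.
rewrite [X in _ = X + _]malgUM [X in _ = _ + X]malgUM.
rewrite [c * d * _]mulrC [c * d * _]mulrC [X in X + _ = _]malgU_divcmMl.
rewrite [X in _ + X = _]malgU_divcmMr.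
have -> : c * (m i)%:R * d = (m i)%:R * (c * d) by ring.
by have -> : c * (d * (n i)%:R) = (n i)%:R * (c * d) by ring.
Qed.

Lemma pdUMr i c (m : cmonom nat) (q : P) :
  pd i (<< c *g m >> * q) = pd i << c *g m >> * q + << c *g m >> * pd i q.
Proof.
rewrite (monalgE q) [X in pd i X]big_distrr !pd_sum.
rewrite [X in X + _]big_distrr [X in _ + X]big_distrr -big_split /=.
by apply: eq_bigr => n _; apply: pdUM.
Qed.

Lemma pdM i (p q : P) : pd i (p * q) = pd i p * q + p * pd i q.
Proof.
rewrite (monalgE p) [X in pd i X]big_distrl !pd_sum.
rewrite [X in X + _]big_distrl [X in _ + X]big_distrl -big_split /=.
by apply: eq_bigr => m _; apply: pdUMr.
Qed.

Lemma pd_kv i j : pd i (kv j) = (i == j)%:R.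
Proof.
rewrite /kv pdU ucmE mul1r eq_sym; case: eqP => [<-|_]; last first.
  by rewrite mulr0n monalgU0.
suff -> : divcm (ucm i) (ucm i) = mone by rewrite mpolyC1E.
by apply/eqP/cmP => k; rewrite divcmE subnn cm1.
Qed.

Lemma pd_nvar i (p : P) : (nvar p <= i)%N -> pd i p = 0.
Proof.
move=> le_p_i; rewrite /pd big1_seq // => m /andP[_ mp].
suff -> : m i = 0%N by rewrite mulr0 scale0r.
apply/eqP; rewrite cmE_eq0; apply/negP => im.
have : (i < \max_(j <- finsupp m) j.+1)%N :=
  @leq_bigmax_seq _ (finsupp m : seq nat) xpredT (fun j => j.+1) i im isT.
have : (\max_(j <- finsupp m) j.+1 <= nvar p)%N :=
  @leq_bigmax_seq _ (msupp p : seq _) xpredT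
    (fun m : cmonom nat => \max_(j <- finsupp m) j.+1)%N m mp isT.
lia.
Qed.

Lemma P_ind (Q : P -> Prop) :
  Q 1 -> (forall i, Q (kv i)) ->
  (forall x y, Q x -> Q y -> Q (x + y)) -> (forall x y, Q x -> Q y -> Q (x * y)) ->
  (forall c x, Q x -> Q (c *: x)) -> forall p, Q p.
Proof.
move=> Q1 Qkv QD QM QZ.
have Q0 : Q 0 by rewrite -(scale0r 1); apply: QZ.
have Qmon (m : cmonom nat) : Q << m >>.
  elim: {m}(mdeg m) {-2}m (erefl (mdeg m)) => [|n IH] m degm.
    by rewrite (mdeg_eq0I degm).
  have /fset0Pn[i im] : finsupp m != fset0.
    by apply: contra_eqN degm => /eqP fm0; rewrite mdegE fm0 big_seq_fset0.
  have mi : (0 < m i)%N by rewrite lt0n cmE_neq0.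
  have em : m = mmul (ucm i) (divcm m (ucm i)).
    by apply/eqP/cmP => j; rewrite cmM divcmE ucmE; case: eqP => [<-|]; lia.
  have degm' : mdeg (divcm m (ucm i)) = n.
    by move: degm; rewrite {1}em mdegM mdegU; lia.
  by rewrite em -[1]mulr1 -malgUM; apply: QM (Qkv i) (IH _ degm').
move=> p; rewrite (monalgE p); apply: (big_ind Q Q0 QD) => m _.
by rewrite -scale_malgU; exact: QZ (Qmon m).
Qed.

Lemma pd_derivation i : derivation (pd i).
Proof. split; [exact: pdD | exact: pdZ | exact: pdM]. Qed.

Lemma extD_derivation e : derivation (extD e).
Proof. exact: (sum_pd_derivation pd_derivation pd_nvar). Qed.

Lemma extD_kv e j : extD e (kv j) = e j.
Proof. exact: (sum_pd_gen pd_kv pd_nvar). Qed.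

Lemma D_derivation : derivation D. Proof. exact: extD_derivation. Qed.
Lemma D_kv i : D (kv i) = kv i.+1. Proof. exact: extD_kv. Qed.
Lemma pder_derivation a : derivation (pder a). Proof. exact: extD_derivation. Qed.
Lemma pder_kv a i : pder a (kv i) = Dn i a. Proof. exact: extD_kv. Qed.

Lemma DnD m : {morph Dn m : x y / x + y}. Proof. exact: (iter_derD D_derivation m). Qed.
Lemma DnZ m c x : Dn m (c *: x) = c *: Dn m x. Proof. exact: (iter_derZ D_derivation m). Qed.
Lemma DnB m : {morph Dn m : x y / x - y}. Proof. exact: (iter_derB D_derivation m). Qed.

Lemma pder_D a p : pder a (D p) = D (pder a p).
Proof.
apply: (derivations_commute P_ind (pder_derivation a) D_derivation) => i.
by rewrite [in LHS]D_kv [in LHS]pder_kv [in RHS]pder_kv.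
Qed.

Lemma pder_Dn a m p : pder a (Dn m p) = Dn m (pder a p).
Proof. by elim: m => //= m IH; rewrite pder_D IH. Qed.

Lemma pder_commutator a b p :
  pder a (pder b p) - pder b (pder a p) = pder (pder a b - pder b a) p.
Proof.
have comm_der := derivation_commutator (pder_derivation a) (pder_derivation b).
apply: (derivation_eq P_ind comm_der (pder_derivation _)) => i /=.
rewrite [in RHS]pder_kv DnB -!pder_Dn.
by rewrite [pder b (kv i)]pder_kv [pder a (kv i)]pder_kv.
Qed.

Lemma pderDl a b p : pder (a + b) p = pder a p + pder b p.
Proof.
rewrite /pder /extD -big_split; apply: eq_bigr => i _ /=.
by rewrite DnD mulrDl.
Qed.

Lemma pderZl c a p : pder (c *: a) p = c *: pder a p.
Proof.
rewrite /pder /extD scaler_sumr; apply: eq_bigr => i _ /=.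
by rewrite DnZ scalerAl.
Qed.

Section SpaceForm.
Variable G : R.

Lemma D_const c : D c%:MP = 0.
Proof. by rewrite -[c%:MP]mulr1 mul_malgC (der_alg D_derivation). Qed.

Lemma pder_const a c : pder a c%:MP = 0.
Proof. by rewrite -[c%:MP]mulr1 mul_malgC (der_alg (pder_derivation a)). Qed.

Lemma Vgen_tangent (V : VF) m : D V.1 = kv 0 * V.2 -> Vgen G V m = Dn m (Vk G V).
Proof.
move=> DV1; have rhoV0 : rhoV V = 0 by rewrite /rhoV DV1 subrr.
by elim: m => // m IH; rewrite [Vgen _ _ _]/= IH rhoV0 mul0r addr0.
Qed.

Lemma Vact_tangent (V : VF) p : D V.1 = kv 0 * V.2 -> Vact G V p = pder (Vk G V) p.
Proof.
move=> DV1; rewrite /Vact /pder /extD; apply: eq_bigr => i _.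
congr (_ * _); exact: Vgen_tangent.
Qed.

Lemma Vk_add (V W : VF) : Vk G (addVF V W) = Vk G V + Vk G W.
Proof. rewrite /Vk /phiV /rhoV; exact: (curvD _ _ D_derivation). Qed.

Lemma Vk_scale c (V : VF) : Vk G (scaleVF c V) = c *: Vk G V.
Proof. rewrite /Vk /phiV /rhoV; exact: (curvZ _ _ D_derivation). Qed.

Lemma Vk_brk (V W : VF) : D V.1 = kv 0 * V.2 -> D W.1 = kv 0 * W.2 ->
  Vk G (brk G V W) = pder (Vk G V) (Vk G W) - pder (Vk G W) (Vk G V).
Proof.
move=> DV1 DW1; rewrite /brk /covD /= !(Vact_tangent _ DV1) !(Vact_tangent _ DW1).
exact: (curv_bracket D_derivation (D_const G) (pder_derivation _) (pder_derivation _)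
  (pder_D _) (pder_D _) (pder_const _ G) (pder_const _ G) DV1 DW1 (pder_kv _ 0) (pder_kv _ 0)).
Qed.

End SpaceForm.
End ArcLengthDerivative.

Theorem proposition4p2 (R : realType) (G : R) (V W : VF R) (c : R) :
  inT V -> inT W ->
  [/\ (forall h : P R, Phi G (addVF V W) h = Phi G V h + Phi G W h),
      (forall h : P R, Phi G (scaleVF c V) h = c *: Phi G V h)
    & (forall h : P R,
         Phi G (brk G V W) h = Phi G V (Phi G W h) - Phi G W (Phi G V h))].
Proof.
move=> [_ DV1] [_ DW1]; split=> h; rewrite /Phi.
- rewrite Vk_add; exact: pderDl.
- rewrite Vk_scale; exact: pderZl.
- rewrite (Vk_brk G DV1 DW1); symmetry; exact: pder_commutator.
Qed.
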